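(* Let $\mathcal{F}$ be a filtration of a finite simplicial complex and $\sigma\notin\mathcal{F}$ a simplex such that $\mathcal{F}\cup\sigma$ (the filtration with $\sigma$ inserted at some filtration value) is a valid filtration. For $\alpha\in(1,\infty)$ and $k\ge1$ let $\Pi_k(\alpha;\mathcal{F})$ be the number of points $(b,d)\in\mathrm{dgm}_k(\mathcal{F})$ with $d/b\ge\alpha$. If $\dim\sigma\in\{k,k+1\}$, then \[ \Pi_k(\alpha;\mathcal{F})-1\le\Pi_k(\alpha;\mathcal{F}\cup\sigma)\le\Pi_k(\alpha;\mathcal{F})+1; \] otherwise $\Pi_k(\alpha;\mathcal{F}\cup\sigma)=\Pi_k(\alpha;\mathcal{F})$.
   Context: A filtration assigns to each simplex a filtration value $w$ such that faces enter no later than their cofaces; the $k$-th persistent homology (field coefficients) decomposes into intervals $[b,d)$ with $b<d\le\infty$, and $\mathrm{dgm}_k$ is the multiset of such $(b,d)$. Filtration values of the simplices contributing births are taken positive so that the ratio $d/b$ is defined, with $d=\infty$ giving ratio $\infty$. Ties between simplices with equal filtration values are broken by an arbitrary but consistent total order. *)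

From HB Require Import structures.
From mathcomp Require Import all_boot all_order all_algebra.
Set Implicit Arguments. Unset Strict Implicit. Unset Printing Implicit Defensive.
Import Order.TTheory GRing.Theory Num.Theory.
Local Open Scope ring_scope.

(* Simplices on the vertex set 'I_m are nonempty subsets of 'I_m.
   A (simplexwise) filtration is a sequence of (simplex, value) pairs; the order
   of the sequence is the total order refining the values (ties broken by the
   sequence order). *)

Definition sdim (m : nat) (s : {set 'I_m}) : nat := (#|s|).-1.

Section Filtration.
Variables (R : realFieldType) (m : nat).

Definition simps (f : seq ({set 'I_m} * R)) : seq {set 'I_m} := map fst f.
Definition wts (f : seq ({set 'I_m} * R)) : seq R := map snd f.

(* valid filtration: distinct nonempty simplices, values nondecreasing along
   the order, every nonempty proper face of a simplex occurs strictly earlier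
   (so the simplices form a finite simplicial complex and each prefix is a
   subcomplex). *)
Definition is_filtration (f : seq ({set 'I_m} * R)) : Prop :=
  [/\ uniq (simps f),
      all (fun s => s != set0) (simps f),
      sorted (fun x y : R => x <= y) (wts f) &
      forall i, (i < size f)%N -> forall t : {set 'I_m}, t != set0 ->
        t \proper nth set0 (simps f) i ->
        exists2 j, (j < i)%N & nth set0 (simps f) j = t ].

(* filtration values of all simplices of dimension >= 1 are positive
   (these are the only simplices that can contribute births in degree k >= 1) *)
Definition births_positive (f : seq ({set 'I_m} * R)) : Prop :=
  forall i, (i < size f)%N -> (1 <= sdim (nth set0 (simps f) i))%N ->
    0 < nth 0 (wts f) i.

Definition finsert (p : nat) (x : {set 'I_m} * R) (f : seq ({set 'I_m} * R)) :=
  take p f ++ x :: drop p f.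

Variable F : fieldType.

(* coefficient of the face t in the oriented boundary of s
   (vertices ordered by their index) *)
Definition bcoef (s t : {set 'I_m}) : F :=
  \sum_(v in s | t == s :\ v) (-1) ^+ #|[set u in s | (val u < val v)%N]|.

Section Homology.
Variable f : seq ({set 'I_m} * R).
Local Notation n := (size f).
Local Notation s_ a := (nth set0 (simps f) a).

(* chains are row vectors indexed by the positions of the filtration;
   c *m Dmx is the boundary of c *)
Definition Dmx : 'M[F]_n := \matrix_(a < n, b < n) bcoef (s_ a) (s_ b).

(* row space = k-chains of K_i (the subcomplex of the first i simplices) *)
Definition Cmx (k i : nat) : 'M[F]_n :=
  \matrix_(a < n, b < n) ((a == b) && (a < i)%N && (sdim (s_ a) == k))%:R.

Definition Zmx (k i : nat) : 'M[F]_n := (Cmx k i :&: kermx Dmx)%MS.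
Definition Bmx (k j : nat) : 'M[F]_n := (Cmx k.+1 j *m Dmx)%MS.

(* persistent Betti number: rank of H_k(K_i) -> H_k(K_j), i <= j *)
Definition pbetti (k i j : nat) : int :=
  (\rank (Zmx k i))%:Z - (\rank (Zmx k i :&: Bmx k j)%MS)%:Z.

(* multiplicity of the index interval [i, j) (1 <= i < j <= n): class born
   when simplex s_(i-1) enters, dying when s_(j-1) enters *)
Definition pmult (k i j : nat) : int :=
  pbetti k i j.-1 - pbetti k i j - pbetti k i.-1 j.-1 + pbetti k i.-1 j.
Definition pmult_inf (k i : nat) : int := pbetti k i n - pbetti k i.-1 n.

(* Pi_k(alpha; f): number of points (b,d) of dgm_k with d/b >= alpha
   (b = value of s_(i-1) > 0, d = value of s_(j-1), or d = oo) *)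
Definition Pi (k : nat) (alpha : R) : int :=
  \sum_(1 <= i < n.+1) \sum_(i.+1 <= j < n.+1)
     (if alpha * nth 0 (wts f) i.-1 <= nth 0 (wts f) j.-1
      then pmult k i j else 0)
  + \sum_(1 <= i < n.+1) pmult_inf k i.
End Homology.
End Filtration.

From HB Require Import structures.
From mathcomp Require Import all_boot all_order all_algebra.
From mathcomp Require Import zify.
Set Implicit Arguments. Unset Strict Implicit. Unset Printing Implicit Defensive.
Import Order.TTheory GRing.Theory Num.Theory.
Local Open Scope ring_scope.

(* Inserting sigma embeds the chains of f, as the chains with zero sigma-coordinate, into
   those of the new filtration f'; since sigma is not a face of an old simplex, the
   embedding commutes with the boundary maps.  Pi_k is a sum over births i of the rank
   gained by Z_k(K_i) + B_k(K_t) when the i-th simplex enters, taken at the first t where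
   the value ratio reaches alpha.  If
   dim sigma is not k or k+1, all cycle and boundary spaces are unchanged.  If
   dim sigma = k, boundaries are unchanged and each cycle space grows by at most one
   dimension, so the difference telescopes to a number in [-1, 1].  If dim sigma = k+1,
   cycles are unchanged and the boundary spaces after sigma gain the one vector
   d(sigma); the excess per term is then 0/1-valued and antitone in both arguments,
   which forces the sum into [-1, 0]. *)

Lemma eqmx_subrV (F : fieldType) m1 m2 n (A : 'M[F]_(m1, n)) (B : 'M[F]_(m2, n)) :
  (forall u : 'rV_n, (u <= A)%MS = (u <= B)%MS) -> (A :=: B)%MS.
Proof.
move=> AB; apply/eqmxP/andP; split; apply/row_subP => i; first by rewrite -AB row_sub.
by rewrite AB row_sub.
Qed.

Section CoordinateProjection.
Variables (F : fieldType) (N : nat).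

Definition coordmx (c : pred 'I_N) : 'M[F]_N := \matrix_(a, b) ((a == b) && c a)%:R.

Lemma eq_coordmx (c1 c2 : pred 'I_N) : c1 =1 c2 -> coordmx c1 = coordmx c2.
Proof. by move=> c12; apply/matrixP => a b; rewrite !mxE c12. Qed.

Lemma mul_coordmx (c : pred 'I_N) (u : 'rV[F]_N) :
  u *m coordmx c = \row_b (if c b then u 0 b else 0).
Proof.
apply/rowP => b; rewrite !mxE (bigD1 b) //= big1 ?addr0 => [|a nab]; rewrite !mxE.
  by rewrite eqxx; case: (c b); rewrite ?mulr1 ?mulr0.
by rewrite (negbTE nab) mulr0.
Qed.

Lemma sub_coordmx (c : pred 'I_N) (u : 'rV[F]_N) :
  (u <= coordmx c)%MS = [forall b, ~~ c b ==> (u 0 b == 0)].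
Proof.
apply/idP/forallP => [/submxP[v ->] b | u_c].
  by rewrite mul_coordmx mxE; case: (c b); rewrite ?eqxx.
suff -> : u = u *m coordmx c by apply: submxMl.
apply/rowP => b; rewrite mul_coordmx mxE; case cb: (c b) => //.
by apply/eqP; apply: (implyP (u_c b)); rewrite cb.
Qed.

Lemma coordmxS (c1 c2 : pred 'I_N) :
  subpred c1 c2 -> (coordmx c1 <= coordmx c2)%MS.
Proof.
move=> c12; apply/row_subP => a; rewrite sub_coordmx; apply/forallP => b.
rewrite !mxE; apply/implyP => nc2; case: (a =P b) => [ab|_] //=.
case: (boolP (c1 a)) => [c1a|_]; rewrite ?eqxx //.
by move: (c12 a c1a) nc2; rewrite ab => ->.
Qed.

Lemma coordmxU (c1 c2 : pred 'I_N) : (forall b, ~~ (c1 b && c2 b)) ->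
  (coordmx (predU c1 c2) :=: coordmx c1 + coordmx c2)%MS.
Proof.
move=> c12; apply/eqmxP/andP; split; last first.
  by rewrite addsmx_sub !coordmxS // => b /= ->; rewrite ?orbT.
suff -> : coordmx (predU c1 c2) = coordmx c1 + coordmx c2 by apply: addmx_sub_adds.
apply/matrixP => a b; rewrite !mxE /=; move: (c12 a).
by case: (c1 a); case: (c2 a); case: (a == b); rewrite ?addr0 ?add0r.
Qed.

End CoordinateProjection.

Section Embedding.
Variables (F : fieldType) (n N : nat) (iota : 'I_n -> 'I_N) (q : 'I_N).
Hypothesis iota_inj : injective iota.
Hypothesis iota_neq : forall a, iota a != q.
Hypothesis iota_onto : forall b, b != q -> exists a, iota a = b.

Definition embmx : 'M[F]_(n, N) := \matrix_(a, b) (iota a == b)%:R.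

Lemma embmx_iota (x : 'rV[F]_n) a : (x *m embmx) 0 (iota a) = x 0 a.
Proof.
rewrite mxE (bigD1 a) //= big1 ?addr0 => [|c nca]; rewrite !mxE ?eqxx ?mulr1 //.
by rewrite (inj_eq iota_inj) (negbTE nca) mulr0.
Qed.

Lemma embmx_missed (x : 'rV[F]_n) : (x *m embmx) 0 q = 0.
Proof. by rewrite mxE big1 // => c _; rewrite !mxE (negbTE (iota_neq c)) mulr0. Qed.

Lemma trembmx_iota (u : 'rV[F]_N) a : (u *m embmx^T) 0 a = u 0 (iota a).
Proof.
rewrite mxE (bigD1 (iota a)) //= big1 ?addr0 => [|c nc]; rewrite !mxE ?eqxx ?mulr1 //.
by rewrite eq_sym (negbTE nc) mulr0.
Qed.

Lemma embmx_mul_tr : embmx *m embmx^T = 1%:M.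
Proof.
apply/matrixP => a a'; rewrite !mxE (bigD1 (iota a)) //= big1 ?addr0.
  by rewrite !mxE eqxx mul1r (inj_eq iota_inj) eq_sym.
by move=> c nc; rewrite !mxE eq_sym (negbTE nc) mul0r.
Qed.

Lemma embmxK m (x : 'M[F]_(m, n)) : x *m embmx *m embmx^T = x.
Proof. by rewrite -mulmxA embmx_mul_tr mulmx1. Qed.

Lemma row_free_embmx : row_free embmx.
Proof. by apply/row_freeP; exists embmx^T; exact: embmx_mul_tr. Qed.

Lemma sub_embmx (u : 'rV[F]_N) : (u <= embmx)%MS = (u 0 q == 0).
Proof.
apply/idP/eqP => [/submxP[x ->]|uq]; first exact: embmx_missed.
suff -> : u = u *m embmx^T *m embmx by apply: submxMl.
apply/rowP => b; have [->|/iota_onto[a <-]] := eqVneq b q; first by rewrite embmx_missed.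
by rewrite embmx_iota trembmx_iota.
Qed.

Lemma sub_mulmx_embmx m (A : 'M[F]_(m, n)) (u : 'rV[F]_N) :
  (u <= A *m embmx)%MS = (u <= embmx)%MS && (u *m embmx^T <= A)%MS.
Proof.
apply/idP/andP => [/submxP[x ->]|[/submxP[x ->] xA]].
  by rewrite mulmxA embmxK !submxMl.
by rewrite embmxK in xA; rewrite submxMr.
Qed.

Lemma capmx_mulmx_embmx (A B : 'M[F]_n) :
  ((A :&: B) *m embmx :=: A *m embmx :&: B *m embmx)%MS.
Proof.
apply: eqmx_subrV => u; rewrite sub_capmx !sub_mulmx_embmx sub_capmx.
by case: (u <= embmx)%MS.
Qed.

Lemma embmx_comm (D : 'M[F]_n) (D' : 'M[F]_N) :
  (forall a b, D' (iota a) (iota b) = D a b) -> (forall a, D' (iota a) q = 0) ->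
  embmx *m D' = D *m embmx.
Proof.
move=> D'D D'q; apply/matrixP => a b; rewrite !mxE (bigD1 (iota a)) //= big1 ?addr0;
  last by move=> c nc; rewrite !mxE eq_sym (negbTE nc) mul0r.
rewrite !mxE eqxx mul1r; have [->|/iota_onto[c <-]] := eqVneq b q.
  by rewrite D'q big1 // => c _; rewrite !mxE (negbTE (iota_neq c)) mulr0.
rewrite D'D (bigD1 c) //= big1 ?addr0 ?mxE ?eqxx ?mulr1 // => d ndc.
by rewrite !mxE (inj_eq iota_inj) (negbTE ndc) mulr0.
Qed.

Lemma kermx_mulmx_embmx (D : 'M[F]_n) (D' : 'M[F]_N) :
  embmx *m D' = D *m embmx -> (kermx D *m embmx :=: kermx D' :&: embmx)%MS.
Proof.
move=> ED; apply: eqmx_subrV => u; rewrite sub_capmx sub_mulmx_embmx !sub_kermx andbC.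
case uE: (u <= embmx)%MS; rewrite ?andbF ?andbT //; move/submxP: uE => [x ->].
by rewrite embmxK -mulmxA ED mulmxA (mulmx_free_eq0 _ row_free_embmx).
Qed.

Lemma coordmx_embmx (c : pred 'I_n) (c' : pred 'I_N) :
  (forall a, c' (iota a) = c a) ->
  (coordmx F c *m embmx :=: coordmx F c' :&: embmx)%MS.
Proof.
move=> cc'; apply: eqmx_subrV => u; rewrite sub_mulmx_embmx sub_capmx andbC sub_embmx.
rewrite !sub_coordmx; case uq: (u 0 q == 0); rewrite ?andbT ?andbF //.
apply/forallP/forallP => u_c b.
  apply/implyP => nc'b; have [->|/iota_onto[a ab]] := eqVneq b q; first by rewrite uq.
  by move: (u_c a); rewrite trembmx_iota -cc' ab nc'b.
by rewrite trembmx_iota -cc'; apply: u_c.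
Qed.

Lemma coordmx_capmx_embmx (c : pred 'I_N) :
  (coordmx F (fun b => c b && (b != q)) :=: coordmx F c :&: embmx)%MS.
Proof.
apply: eqmx_subrV => u; rewrite sub_capmx sub_embmx !sub_coordmx.
apply/forallP/andP => [u_c|[/forallP u_c /eqP uq] b].
  split; last by move: (u_c q); rewrite eqxx andbF.
  by apply/forallP => b; apply/implyP => ncb; move: (u_c b); rewrite (negbTE ncb).
apply/implyP; have [->|nbq] := eqVneq b q; first by rewrite uq.
by rewrite andbT; apply/implyP: (u_c b).
Qed.

End Embedding.

Section Ranks.
Variables (F : fieldType) (N : nat).

Lemma mxrank_adds_submod m1 m2 m3 (X : 'M[F]_(m1, N)) (Y : 'M[F]_(m2, N))
    (W : 'M[F]_(m3, N)) :
  (X <= Y)%MS -> (\rank (Y + W) + \rank X <= \rank (X + W) + \rank Y)%N.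
Proof.
move=> sXY; have := mxrank_sum_cap Y (X + W)%MS.
have -> : (Y + (X + W) :=: Y + W)%MS.
  apply/eqmxP; rewrite !addsmx_sub addsmxSl addsmxSr (submx_trans sXY) ?addsmxSl //=.
  by rewrite (submx_trans (addsmxSr X W)) ?addsmxSr.
rewrite (addnC (\rank (X + W))) => <-; rewrite leq_add2l mxrankS //.
by rewrite sub_capmx sXY addsmxSl.
Qed.

Lemma mxrank_adds_capmx m1 m2 m3 m4 (X : 'M[F]_(m1, N)) (Y : 'M[F]_(m2, N))
    (E : 'M[F]_(m3, N)) (B : 'M[F]_(m4, N)) :
  (X :=: Y :&: E)%MS -> (B <= E)%MS ->
  (\rank (Y + B) + \rank X = \rank (X + B) + \rank Y)%N.
Proof.
move=> defX sBE; have XB_YB : (X :&: B :=: Y :&: B)%MS.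
  apply/eqmxP/andP; split; first by rewrite capmxS // defX capmxSl.
  by rewrite sub_capmx capmxSr defX sub_capmx capmxSl (submx_trans (capmxSr _ _) sBE).
have := mxrank_sum_cap Y B; have := mxrank_sum_cap X B; rewrite XB_YB; lia.
Qed.

Lemma mxrank_capmx_codim m1 m2 (Y : 'M[F]_(m1, N)) (E : 'M[F]_(m2, N)) :
  (\rank Y + \rank E <= \rank (Y :&: E) + N)%N.
Proof. by rewrite -mxrank_sum_cap addnC leq_add2l rank_leq_col. Qed.

End Ranks.

Lemma telescope_sumr_gt (V : zmodType) (u : nat -> V) (a i n : nat) :
  (i <= n)%N -> (a <= n)%N ->
  \sum_(i.+1 <= j < n.+1) (if (a < j)%N then u j.-1 - u j else 0) + u n
    = u (maxn i a).
Proof.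
move=> le_in le_an; have le_Mn : (maxn i a <= n)%N by rewrite geq_max le_in.
rewrite (big_cat_nat _ (n := (maxn i a).+1)) ?ltnS ?leq_maxl //=.
rewrite big_nat_cond big1 ?add0r => [|j /andP[/andP[ij jM] _]]; last first.
  by rewrite ltnS leq_max leqNgt ij /= in jM; rewrite ifN // -leqNgt.
rewrite big_add1 /= (telescope_sumr_eq (fun j => - u j)) => [|//|j /andP[Mj _]].
  by rewrite opprK addrAC addNr add0r.
by rewrite ifT ?opprK 1?addrC // ltnS (leq_trans (leq_maxr i a)).
Qed.

Section IncrementSums.
Variables (h : nat -> nat -> int) (T : nat -> nat) (p M : nat).
Hypothesis h01 : forall I t, 0 <= h I t <= 1.
Hypothesis h_antiI : forall I J t, (I <= J)%N -> h J t <= h I t.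
Hypothesis h_antit : forall I t t', (p < t <= t')%N -> h I t' <= h I t.
Hypothesis h_low : forall I t, (t <= p)%N -> h I t = 0.
Hypothesis T_incr : forall I, (I < M)%N -> (T I <= T I.+1)%N.

Let S K := \sum_(1 <= I < K.+1) (h I (T I) - h I.-1 (T I)).

Lemma sum_diag_increments_bound : -1 <= S M <= 0.
Proof.
apply/andP; split; last first.
  by rewrite /S big_nat sumr_le0 // => I _; rewrite subr_le0 h_antiI // leq_pred.
suff /(_ M (leqnn M))[_] : forall K, (K <= M)%N ->
    ((T K <= p)%N -> S K = 0) /\ -1 <= S K - h K (T K).
  by move: (h01 M (T M)); lia.
elim=> [_|K IHK le_KM]; first by rewrite /S big_geq //; split=> //; move: (h01 0 (T 0)); lia.
have [IH0 IH1] := IHK (ltnW le_KM); have TK := T_incr le_KM.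
rewrite /S big_nat_recr //= -/(S K); split.
  by move=> TKp; rewrite IH0 ?(leq_trans TK) // !h_low ?subrr ?addr0.
case: (leqP (T K) p) => [TKp|pTK]; first by rewrite IH0 //; move: (h01 K (T K.+1)); lia.
by have := @h_antit K (T K) (T K.+1); rewrite pTK TK => /(_ isT); lia.
Qed.

End IncrementSums.

(* The first [I] simplices of the filtration with a simplex inserted at position [p]
   contain [old_prefix p I] simplices of the original one. *)
Definition old_prefix (p I : nat) : nat := (I - (p < I))%N.

Lemma big_old_prefix (V : zmodType) (G H : nat -> V) (n p : nat) :
  (p <= n)%N -> G p.+1 = 0 ->
  (forall I, (0 < I < n.+2)%N -> I != p.+1 -> G I = H (old_prefix p I)) ->
  \sum_(1 <= I < n.+2) G I = \sum_(1 <= i < n.+1) H i.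
Proof.
move=> le_pn Gp GH.
rewrite (big_cat_nat _ (n := p.+1)) // 1?ltnW // [RHS](big_cat_nat _ (n := p.+1)) //=.
congr (_ + _).
  apply: eq_big_nat => I /andP[I0 Ip]; have In : (I < n.+2)%N by lia.
  rewrite GH ?(ltn_eqF Ip) ?I0 ?In //.
  by rewrite /old_prefix ltnNge -ltnS Ip subn0.
rewrite big_nat_recl // Gp add0r; apply: eq_big_nat => I /andP[pI In].
by rewrite GH ?gtn_eqF ?ltnS ?In // /old_prefix ltnS (ltnW pI) subn1.
Qed.

Lemma old_prefix_bump (p a I : nat) : (bump p a < I)%N = (a < old_prefix p I)%N.
Proof. by rewrite /bump /old_prefix; case: (leqP p a); case: (ltnP p I); lia. Qed.

Lemma old_prefix_maxn (p a b : nat) :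
  old_prefix p (maxn a b) = maxn (old_prefix p a) (old_prefix p b).
Proof. by rewrite /old_prefix; case: (ltnP p a); case: (ltnP p b); lia. Qed.

Lemma leq_old_prefix (p : nat) : {homo old_prefix p : a b / (a <= b)%N}.
Proof. by move=> a b; rewrite /old_prefix; case: (ltnP p a); case: (ltnP p b); lia. Qed.

Lemma old_prefix_pred (p I : nat) : I != p.+1 -> old_prefix p I.-1 = (old_prefix p I).-1.
Proof. by rewrite /old_prefix; case: (ltnP p I); case: (ltnP p I.-1); lia. Qed.

Lemma sorted_le_nthE (R : realFieldType) (s : seq R) (c : R) (j : nat) :
  sorted <=%R s -> (j < size s)%N ->
  (c <= nth 0 s j) = (find (fun x => (c <= x)%R) s <= j)%N.
Proof.
move=> s_sorted js; case: (ltnP j (find (fun x => (c <= x)%R) s)) => [|le_fj].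
  exact: before_find.
have le_fs : (find (fun x => (c <= x)%R) s < size s)%N := leq_ltn_trans le_fj js.
have c_le : c <= nth 0 s (find (fun x => (c <= x)%R) s) by apply: nth_find; rewrite has_find.
apply: le_trans c_le _.
by apply: (sorted_leq_nth le_trans lexx) => //; rewrite inE.
Qed.

Section PersistenceCounting.
Variables (F : fieldType) (R : realFieldType) (m : nat).
Implicit Types (g : seq ({set 'I_m} * R)) (k i j t : nat) (alpha : R).

Definition cyc_bd_rank g k i t : int := (\rank (Zmx F g k i + Bmx F g k t))%:Z.

Definition surviving_birth g k i t : int := cyc_bd_rank g k i t - cyc_bd_rank g k i.-1 t.

(* Prefix lengths such as [i] are 1-based (the i-th simplex is [nth _ _ i.-1]), while
   [find] returns a 0-based position: a class born at [i] and dying at [j] satisfies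
   [alpha * b <= d] iff [ratio_threshold g alpha i < j]. *)
Definition ratio_threshold g alpha i : nat :=
  find (fun x => alpha * nth 0 (wts g) i.-1 <= x) (wts g).

Lemma pbetti_cyc_bd_rank g k i j :
  pbetti F g k i j = cyc_bd_rank g k i j - (\rank (Bmx F g k j))%:Z.
Proof.
by rewrite /pbetti /cyc_bd_rank; have := mxrank_sum_cap (Zmx F g k i) (Bmx F g k j); lia.
Qed.

Lemma Pi_surviving_births g k alpha : sorted <=%R (wts g) ->
  Pi F g k alpha = \sum_(1 <= i < (size g).+1)
                     surviving_birth g k i (maxn i (ratio_threshold g alpha i)).
Proof.
move=> g_sorted; rewrite /Pi -big_split /=; apply: eq_big_nat => i /andP[i1 ig].
have size_wts : size (wts g) = size g by rewrite size_map.
rewrite -(@telescope_sumr_gt _ _ (ratio_threshold g alpha i) i (size g)) //; last first.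
  by rewrite -size_wts find_size.
congr (_ + _); last by rewrite /pmult_inf !pbetti_cyc_bd_rank /surviving_birth; lia.
apply: eq_big_nat => j /andP[ij jg]; have jw : (j.-1 < size (wts g))%N by rewrite size_wts; lia.
rewrite (sorted_le_nthE _ g_sorted jw) -/(ratio_threshold g alpha i).
have -> : (ratio_threshold g alpha i <= j.-1)%N = (ratio_threshold g alpha i < j)%N by lia.
by case: ifP => // _; rewrite /pmult !pbetti_cyc_bd_rank /surviving_birth; lia.
Qed.

Lemma ratio_threshold_homo g alpha i j : 0 <= alpha -> sorted <=%R (wts g) ->
  (i <= j <= size g)%N -> (ratio_threshold g alpha i <= ratio_threshold g alpha j)%N.
Proof.
move=> alpha_ge0 g_sorted /andP[ij jg]; apply: sub_find => x; apply: le_trans.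
rewrite ler_wpM2l //; case: j ij jg => [|j] ij jg; first by move: ij; rewrite leqn0 => /eqP->.
by apply: (sorted_leq_nth le_trans lexx) => //; rewrite ?inE ?size_map; lia.
Qed.

End PersistenceCounting.

Lemma nth_take_cons_drop (T : Type) (x0 y : T) (s : seq T) (p j : nat) :
  (p <= size s)%N ->
  nth x0 (take p s ++ y :: drop p s) j =
    if (j < p)%N then nth x0 s j else if j == p then y else nth x0 s j.-1.
Proof.
move=> ps; rewrite nth_cat size_takel //; case: ltnP => [jp|pj]; first by rewrite nth_take.
have [->|/negbTE njp] := eqVneq j p; first by rewrite subnn.
rewrite -[(j - p)%N]prednK ?subn_gt0 ?ltn_neqAle ?pj 1?eq_sym ?njp //= nth_drop.
by congr nth; lia.
Qed.

Section Insertion.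
Variables (R : realFieldType) (m : nat) (f : seq ({set 'I_m} * R)).
Variables (sigma : {set 'I_m}) (w : R) (p : nat).
Hypothesis le_p_size : (p <= size f)%N.

Local Notation f' := (finsert p (sigma, w) f).

Lemma simps_finsert : simps f' = take p (simps f) ++ sigma :: drop p (simps f).
Proof. by rewrite /simps /finsert map_cat map_take /= map_drop. Qed.

Lemma wts_finsert : wts f' = take p (wts f) ++ w :: drop p (wts f).
Proof. by rewrite /wts /finsert map_cat map_take /= map_drop. Qed.

Lemma size_finsert : size f' = (size f).+1.
Proof. by rewrite /finsert size_cat /= size_takel // size_drop addnS subnKC. Qed.

Lemma new_pos_subproof : (p < size f')%N.
Proof. by rewrite size_finsert ltnS. Qed.

Definition new_pos : 'I_(size f') := Ordinal new_pos_subproof.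

Lemma old_pos_subproof (a : 'I_(size f)) : (bump p a < size f')%N.
Proof.
by rewrite size_finsert /bump; case: (p <= a)%N => /=; rewrite ?add0n ?add1n ltnS // ltnW.
Qed.

Definition old_pos (a : 'I_(size f)) : 'I_(size f') := Ordinal (old_pos_subproof a).

Lemma old_pos_inj : injective old_pos.
Proof. by move=> a b /(congr1 val) /(can_inj (bumpK p)) /val_inj. Qed.

Lemma old_pos_neq a : old_pos a != new_pos.
Proof. by rewrite -val_eqE /= eq_sym neq_bump. Qed.

Lemma old_pos_onto b : b != new_pos -> exists a, old_pos a = b.
Proof.
rewrite -val_eqE /= => bp; have lt_b : (unbump p b < size f)%N.
  have := ltn_ord b; rewrite [X in (_ < X)%N -> _]size_finsert /unbump.
  by move: bp; case: ltngtP; lia.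
by exists (Ordinal lt_b); apply: val_inj; rewrite /= unbumpK //= inE.
Qed.

Lemma nth_simps_old_pos a : nth set0 (simps f') (old_pos a) = nth set0 (simps f) a.
Proof.
rewrite simps_finsert nth_take_cons_drop ?size_map //= /bump.
by case: (leqP p a) => pa; rewrite ?add1n ?add0n ?pa // ltnNge ltnW //= gtn_eqF.
Qed.

Lemma nth_simps_new_pos : nth set0 (simps f') new_pos = sigma.
Proof. by rewrite simps_finsert nth_take_cons_drop ?size_map //= ltnn eqxx. Qed.

Lemma nth_wts_finsert I : (0 < I)%N -> I != p.+1 ->
  nth 0 (wts f') I.-1 = nth 0 (wts f) (old_prefix p I).-1.
Proof.
move=> I0 Ip; rewrite wts_finsert nth_take_cons_drop ?size_map // /old_prefix.
case: (ltnP p I) => pI; last by rewrite subn0 ifT //; lia.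
by rewrite ifF ?ifF ?subn1 //; apply/negbTE; lia.
Qed.

Lemma old_prefix_find (P : pred R) : {homo P : x y / x <= y >-> x ==> y} ->
  sorted <=%R (wts f') -> old_prefix p (find P (wts f')) = find P (wts f).
Proof.
move=> P_up sorted'; rewrite wts_finsert in sorted' *.
rewrite -[in RHS](cat_take_drop p (wts f)) !find_cat size_takel ?size_map //.
case: ifP => [has_take|_].
  rewrite /old_prefix ltnNge ltnW ?subn0 //.
  by rewrite -[X in (_ < X)%N](size_takel (s := wts f)) ?size_map // -has_find.
rewrite /= /old_prefix; case Pw: (P w).
  rewrite addn0 ltnn subn0; case def_s: (drop p (wts f)) => [|x s] /=; first by rewrite addn0.
  move: sorted'; rewrite def_s sorted_cat_cons => /andP[_ /= /andP[wx _]].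
  by rewrite (implyP (P_up _ _ wx) Pw) addn0.
by rewrite addnS ltnS leq_addr subn1.
Qed.

End Insertion.

Section ChainSpaces.
Variables (F : fieldType) (R : realFieldType) (m : nat) (g : seq ({set 'I_m} * R)).

Lemma Cmx_coordmx k i :
  Cmx F g k i = coordmx F (fun a => (a < i)%N && (sdim (nth set0 (simps g) a) == k)).
Proof. by apply/matrixP => a b; rewrite !mxE andbA. Qed.

Lemma Cmx_homo k : {homo Cmx F g k : i j / (i <= j)%N >-> (i <= j)%MS}.
Proof.
move=> i j ij; rewrite !Cmx_coordmx; apply: coordmxS => a /andP[ai ->].
by rewrite (leq_trans ai ij).
Qed.

Lemma Zmx_homo k : {homo Zmx F g k : i j / (i <= j)%N >-> (i <= j)%MS}.
Proof. by move=> i j ij; rewrite capmxS ?Cmx_homo. Qed.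

Lemma Bmx_homo k : {homo Bmx F g k : i j / (i <= j)%N >-> (i <= j)%MS}.
Proof. by move=> i j ij; rewrite submxMr ?Cmx_homo. Qed.

End ChainSpaces.

Section ChainsUnderInsertion.
Variables (F : fieldType) (R : realFieldType) (m : nat) (f : seq ({set 'I_m} * R)).
Variables (sigma : {set 'I_m}) (w : R) (p : nat).
Hypothesis le_p_size : (p <= size f)%N.
Hypothesis f_filt : is_filtration f.
Hypothesis f'_filt : is_filtration (finsert p (sigma, w) f).
Hypothesis sigma_new : sigma \notin simps f.

Local Notation f' := (finsert p (sigma, w) f).
Local Notation pos := (old_pos sigma w le_p_size).
Local Notation new := (new_pos sigma w le_p_size).
Local Notation E := (embmx F pos).
Local Notation pos_inj := (@old_pos_inj _ _ _ sigma w _ le_p_size).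
Local Notation pos_neq := (old_pos_neq sigma w le_p_size).
Local Notation pos_onto := (@old_pos_onto _ _ _ sigma w _ le_p_size).
Local Notation old := (old_prefix p).

Lemma Dmx_finsert_old a b : Dmx F f' (pos a) (pos b) = Dmx F f a b.
Proof. by rewrite !mxE !nth_simps_old_pos. Qed.

Lemma Dmx_finsert_new a : Dmx F f' (pos a) new = 0.
Proof.
(* a facet of an old simplex occurs in f, which sigma does not *)
rewrite mxE nth_simps_old_pos nth_simps_new_pos /bcoef big1 // => v /andP[va /eqP sigma_va].
have sigma_neq0 : sigma != set0.
  case: f'_filt => _ /allP nonempty _ _; apply: nonempty.
  by rewrite simps_finsert // mem_cat in_cons eqxx orbT.
case: f_filt => _ _ _ /(_ a (ltn_ord a) sigma sigma_neq0).
rewrite sigma_va properD1 // -sigma_va => /(_ isT)[j ja sj].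
by case/negP: sigma_new; rewrite -sj mem_nth // size_map (ltn_trans ja).
Qed.

Lemma embmx_Dmx_finsert : E *m Dmx F f' = Dmx F f *m E.
Proof. exact: (embmx_comm pos_inj pos_neq pos_onto Dmx_finsert_old Dmx_finsert_new). Qed.

Lemma Cmx_finsert k I : (Cmx F f k (old I) *m E :=: Cmx F f' k I :&: E)%MS.
Proof.
rewrite !Cmx_coordmx; apply: (coordmx_embmx F pos_inj pos_neq pos_onto) => a.
by rewrite nth_simps_old_pos /= old_prefix_bump.
Qed.

Lemma Zmx_finsert k I : (Zmx F f k (old I) *m E :=: Zmx F f' k I :&: E)%MS.
Proof.
apply: eqmx_trans (capmx_mulmx_embmx pos_inj _ _) _.
apply: eqmx_trans (cap_eqmx (Cmx_finsert _ _) (kermx_mulmx_embmx pos_inj embmx_Dmx_finsert)) _.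
by apply: eqmx_subrV => u; rewrite !sub_capmx andbACA andbb.
Qed.

Lemma Bmx_finsert k t :
  (Bmx F f k (old t) *m E :=: (Cmx F f' k.+1 t :&: E) *m Dmx F f')%MS.
Proof. by rewrite /Bmx -mulmxA -embmx_Dmx_finsert mulmxA; apply/eqmxMr/Cmx_finsert. Qed.

Lemma Cmx_finsert_sub k I : sdim sigma != k -> (Cmx F f' k I <= E)%MS.
Proof.
move=> sigma_k; apply/row_subP => a; rewrite (sub_embmx pos_inj pos_neq pos_onto) !mxE.
have [->|//] := eqVneq a new; by rewrite nth_simps_new_pos (negbTE sigma_k) andbF.
Qed.

Lemma Zmx_finsert_eq k I : sdim sigma != k ->
  (Zmx F f k (old I) *m E :=: Zmx F f' k I)%MS.
Proof.
move=> sigma_k; apply: eqmx_trans (Zmx_finsert k I) _; apply/capmx_idPl.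
exact: submx_trans (capmxSl _ _) (Cmx_finsert_sub _ sigma_k).
Qed.

Lemma Bmx_finsert_eq k t : sdim sigma != k.+1 ->
  (Bmx F f k (old t) *m E :=: Bmx F f' k t)%MS.
Proof.
by move=> sigma_k1; apply: eqmx_trans (Bmx_finsert k t) _; apply/eqmxMr/capmx_idPl/Cmx_finsert_sub.
Qed.

(* the matrix whose only nonzero row is the boundary of sigma *)
Definition sigma_bd : 'M[F]_(size f') := coordmx F (pred1 new) *m Dmx F f'.

Lemma mxrank_sigma_bd : (\rank sigma_bd <= 1)%N.
Proof.
apply: leq_trans (mxrankM_maxl _ _) _.
have -> : coordmx F (pred1 new) = delta_mx new new.
  apply/matrixP => a b; rewrite !mxE /=.
  by have [->|] := eqVneq a new; rewrite ?andbF // andbT eq_sym.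
by rewrite mxrank_delta.
Qed.

Lemma Bmx_finsert_split k t : sdim sigma = k.+1 ->
  (Bmx F f' k t :=: Bmx F f k (old t) *m E + (if (p < t)%N then sigma_bd else 0))%MS.
Proof.
move=> sigma_k1; apply: eqmx_trans _ (adds_eqmx (eqmx_sym (Bmx_finsert k t)) (eqmx_refl _)).
set c := fun a : 'I_(size f') => (a < t)%N && (sdim (nth set0 (simps f') a) == k.+1).
have def_c : c =1 predU (fun a => c a && (a != new)) (fun a => c a && (a == new)).
  by move=> a /=; case: (c a); case: (a =P new).
have c_new : coordmx F (fun a => c a && (a == new)) =
               if (p < t)%N then coordmx F (pred1 new) else 0.
  apply/matrixP => a b; rewrite /c !mxE; have [->|na] := eqVneq a new.
    rewrite nth_simps_new_pos sigma_k1 eqxx !andbT -[(new < t)%N]/(p < t)%N.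
    by case: ifP => _; rewrite !mxE /= ?eqxx ?andbT ?andbF ?mulr0n.
  by rewrite !andbF; case: ifP => _; rewrite !mxE /= ?(negbTE na) ?andbF ?mulr0n.
rewrite /Bmx Cmx_coordmx -/c {1}(eq_coordmx F def_c).
apply: eqmx_trans (eqmxMr _ (coordmxU F _)) _.
  by move=> a; case: (a == new); rewrite ?andbF ?andbN.
apply: eqmx_trans (addsmxMr _ _ _) _; apply: adds_eqmx.
  by apply: eqmxMr; exact: (coordmx_capmx_embmx F pos_inj pos_neq pos_onto).
by rewrite c_new /sigma_bd; case: ifP; rewrite ?mul0mx.
Qed.

Section Counting.
Variables (k : nat) (alpha : R).
Hypothesis alpha_ge0 : 0 <= alpha.

Definition cutoff I := maxn I (ratio_threshold f' alpha I).

Definition old_rank I t : int := cyc_bd_rank F f k (old I) (old t).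

Definition rank_excess I t : int := cyc_bd_rank F f' k I t - old_rank I t.

Lemma f_sorted : sorted <=%R (wts f). Proof. by case: f_filt. Qed.
Lemma f'_sorted : sorted <=%R (wts f'). Proof. by case: f'_filt. Qed.

Lemma cutoff_homo I J : (I <= J <= size f')%N -> (cutoff I <= cutoff J)%N.
Proof.
move=> IJ; have := ratio_threshold_homo alpha_ge0 f'_sorted IJ.
by case/andP: IJ => IJ _; rewrite /cutoff; lia.
Qed.

Lemma old_prefix_cutoff I : (0 < I)%N -> I != p.+1 ->
  old (cutoff I) = maxn (old I) (ratio_threshold f alpha (old I)).
Proof.
move=> I0 Ip; rewrite /cutoff old_prefix_maxn /ratio_threshold nth_wts_finsert //.
by rewrite (old_prefix_find le_p_size) ?f'_sorted // => x y xy; apply/implyP => /le_trans; apply.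
Qed.

Lemma Pi_old_reindexed :
  Pi F f k alpha =
    \sum_(1 <= I < (size f').+1) (old_rank I (cutoff I) - old_rank I.-1 (cutoff I)).
Proof.
rewrite (Pi_surviving_births _ _ _ f_sorted) size_finsert //; symmetry.
apply: (@big_old_prefix _ _ _ _ p) => // [|I /andP[I0 _] Ip].
  by rewrite /old_rank /= /old_prefix ltnSn ltnn subn1 subn0 subrr.
by rewrite /old_rank (old_prefix_pred Ip) -old_prefix_cutoff.
Qed.

Lemma Pi_finsert_sub : Pi F f' k alpha - Pi F f k alpha =
  \sum_(1 <= I < (size f').+1) (rank_excess I (cutoff I) - rank_excess I.-1 (cutoff I)).
Proof.
rewrite Pi_old_reindexed (Pi_surviving_births _ _ _ f'_sorted) -sumrB.
by apply: eq_big_nat => I _; rewrite /rank_excess /surviving_birth /cutoff; lia.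
Qed.

Lemma old_rank_embmx I t :
  old_rank I t = (\rank (Zmx F f k (old I) *m E + Bmx F f k (old t) *m E))%:Z.
Proof.
rewrite /old_rank /cyc_bd_rank -addsmxMr mxrankMfree //.
by apply: row_free_embmx; apply: old_pos_inj.
Qed.

Lemma rank_excess_eq0 I t : sdim sigma != k -> sdim sigma != k.+1 -> rank_excess I t = 0.
Proof.
move=> sigma_k sigma_k1; apply/eqP; rewrite subr_eq0 old_rank_embmx /cyc_bd_rank.
by rewrite (adds_eqmx (Zmx_finsert_eq I sigma_k) (Bmx_finsert_eq t sigma_k1)).
Qed.

Lemma Pi_finsert_eq : sdim sigma != k -> sdim sigma != k.+1 ->
  Pi F f' k alpha = Pi F f k alpha.
Proof.
move=> sigma_k sigma_k1; apply/eqP; rewrite -subr_eq0 Pi_finsert_sub big_nat big1 // => I _.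
by rewrite !rank_excess_eq0 ?subrr.
Qed.

Lemma Pi_finsert_cycle_dim : sdim sigma = k ->
  -1 <= Pi F f' k alpha - Pi F f k alpha <= 1.
Proof.
move=> sigma_k; have sigma_k1 : sdim sigma != k.+1 by rewrite sigma_k neq_ltn ltnSn.
pose Zold I := Zmx F f k (old I) *m E.
pose gap I : int := (\rank (Zmx F f' k I))%:Z - (\rank (Zold I))%:Z.
have excess_gap I t : rank_excess I t = gap I.
  have Bsub : (Bmx F f' k t <= E)%MS by rewrite -(Bmx_finsert_eq t sigma_k1) submxMl.
  have := mxrank_adds_capmx (Zmx_finsert k I) Bsub.
  rewrite /rank_excess old_rank_embmx /cyc_bd_rank /gap.
  by rewrite (adds_eqmx (eqmx_refl (Zold I)) (Bmx_finsert_eq t sigma_k1)) -/(Zold I); lia.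
have gap01 I : 0 <= gap I <= 1.
  have rank_E := eqP (row_free_embmx F (@old_pos_inj _ _ _ sigma w _ le_p_size)).
  have := mxrank_capmx_codim (Zmx F f' k I) E.
  rewrite rank_E [X in (_ <= _ + X)%N]size_finsert //.
  have := mxrankS (capmxSl (Zmx F f' k I) E).
  by rewrite -!(Zmx_finsert k I) -/(Zold I) /gap; lia.
have -> : Pi F f' k alpha - Pi F f k alpha = gap (size f') - gap 0.
  rewrite Pi_finsert_sub -(telescope_sumr gap (leq0n (size f'))) big_add1 /=.
  by apply: eq_big_nat => I _; rewrite !excess_gap.
by move: (gap01 (size f')) (gap01 0); lia.
Qed.

Lemma Pi_finsert_boundary_dim : sdim sigma = k.+1 ->
  -1 <= Pi F f' k alpha - Pi F f k alpha <= 0.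
Proof.
move=> sigma_k1; have sigma_k : sdim sigma != k by rewrite sigma_k1 neq_ltn ltnSn orbT.
pose W t := if (p < t)%N then sigma_bd else 0.
pose X I t := (Zmx F f' k I + Bmx F f k (old t) *m E)%MS.
have excessE I t : rank_excess I t = (\rank (X I t + W t)%MS)%:Z - (\rank (X I t))%:Z.
  rewrite /rank_excess old_rank_embmx /cyc_bd_rank.
  rewrite (adds_eqmx (eqmx_refl _) (Bmx_finsert_split t sigma_k1)) addsmxA.
  by rewrite (adds_eqmx (Zmx_finsert_eq I sigma_k) (eqmx_refl _)).
have excess_anti I J t t' : (X I t <= X J t')%MS -> W t' = W t ->
    rank_excess J t' <= rank_excess I t.
  by move=> XIJ Wtt'; rewrite !excessE Wtt'; have := mxrank_adds_submod (W t) XIJ; lia.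
rewrite Pi_finsert_sub.
apply: (sum_diag_increments_bound (p := p)) => [I t|I J t IJ|I t t'|I t tp|I IM].
- rewrite excessE; have := mxrankS (addsmxSl (X I t) (W t)).
  have := (mxrank_adds_leqif (X I t) (W t)).1.
  have : (\rank (W t) <= 1)%N by rewrite /W; case: ifP; rewrite ?mxrank0 ?mxrank_sigma_bd.
  lia.
- by apply: excess_anti => //; apply: addsmxS => //; apply: Zmx_homo.
- case/andP=> pt tt'; apply: excess_anti; last by rewrite /W pt (leq_trans pt tt').
  by apply: addsmxS => //; apply/submxMr/Bmx_homo/leq_old_prefix.
- by apply/eqP; rewrite excessE /W ltnNge tp addsmx0 subrr.
- by apply: cutoff_homo; rewrite ltnW.
Qed.

End Counting.

End ChainsUnderInsertion.

Theorem lemma6p2 (F : fieldType) (R : realFieldType) (m : nat)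
    (f : seq ({set 'I_m} * R)) (sigma : {set 'I_m}) (w : R) (p k : nat)
    (alpha : R) :
  is_filtration f ->
  sigma \notin simps f ->
  (p <= size f)%N ->
  is_filtration (finsert p (sigma, w) f) ->
  births_positive (finsert p (sigma, w) f) ->
  (1 <= k)%N -> 1 < alpha ->
  ((sdim sigma == k) || (sdim sigma == k.+1) ->
    Pi F f k alpha - 1 <= Pi F (finsert p (sigma, w) f) k alpha <= Pi F f k alpha + 1)
  /\ (~~ ((sdim sigma == k) || (sdim sigma == k.+1)) ->
    Pi F (finsert p (sigma, w) f) k alpha = Pi F f k alpha).
Proof.
move=> f_filt sigma_new le_p_size f'_filt _ _ alpha_gt1.
have alpha_ge0 : 0 <= alpha by rewrite ltW // (lt_trans ltr01).
have Pi_cycle := Pi_finsert_cycle_dim F le_p_size f_filt f'_filt sigma_new alpha_ge0.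
have Pi_boundary := Pi_finsert_boundary_dim F le_p_size f_filt f'_filt sigma_new alpha_ge0.
split=> [/orP[/eqP/Pi_cycle|/eqP/Pi_boundary]|]; [lia | lia |].
by rewrite negb_or => /andP[sigma_k sigma_k1]; apply: (Pi_finsert_eq F le_p_size).
Qed.
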